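(* Let $(Q,\mathcal S)$ be a hypergraph with $Q=\{q_1,\dots,q_m\}$ and $\mathcal S=\{S_1,\dots,S_n\}$, where $n\ge 2$, every $S_j$ is a nonempty subset of $Q$, and $S_n=Q$. Let $G$ be the graph constructed from $(Q,\mathcal S)$ as follows. Its vertex set consists of the vertices $q_1,\dots,q_m$; vertices $S_1,\dots,S_n$; vertices $S_1',\dots,S_n'$; a vertex $q^i_j$ for every pair $(i,j)$ with $q_i\in S_j$ (let $Q'$ be the set of these); and vertices $q^*,u_1,u_2,v,w$. Its edges are: $q^i_jq_i$ and $q^i_jS_j$ for every $q^i_j\in Q'$; $q_iS_j'$ whenever $q_i\in S_j$; $S_jS_k'$ for all $j,k\in\{1,\dots,n\}$; $q^*u_1$, $q^*u_2$; $q^*q^i_j$ for every $q^i_j\in Q'$; $u_1S_j$ and $u_2S_j$ for every $j$; $u_1v$, $u_2v$; and $wS_j'$ for every $j$. Then $(Q,\mathcal S)$ has a $2$-colouring if and only if $G$ contains the path $P_5$ on five vertices as a contraction.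
   Context: A $2$-colouring of a hypergraph $(Q,\mathcal S)$ is a partition $(Q_1,Q_2)$ of $Q$ such that $Q_1\cap S\neq\emptyset$ and $Q_2\cap S\neq\emptyset$ for every $S\in\mathcal S$. Contracting an edge $uv$ means deleting $u$ and $v$ and adding a new vertex adjacent to $(N(u)\cup N(v))\setminus\{u,v\}$ (no multiple edges or loops). A graph contains $H$ as a contraction if $H$ can be obtained from it by a sequence of edge contractions. *)

From mathcomp Require Import all_boot.
Set Implicit Arguments. Unset Strict Implicit. Unset Printing Implicit Defensive.

(* A (simple) graph is represented on an ambient finite type T by a vertex
   set A : {set T} and an adjacency relation E : rel T (only its values on
   A matter). *)

(* Contracting the edge uv of (A,E): delete u and v, add a new vertex adjacent
   to (N(u) :|: N(v)) minus {u,v}. The new vertex is represented by u itself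
   (the result is isomorphic to the paper's construction). *)
Definition contract_verts (T : finType) (A : {set T}) (v : T) : {set T} := A :\ v.

Definition contract_adj (T : finType) (A : {set T}) (E : rel T) (u v : T) : rel T :=
  fun x y =>
    [&& x \in A :\ v, y \in A :\ v, x != y &
        [|| E x y, (x == u) && E v y | (y == u) && E x v]].

Inductive contracts (T : finType) : {set T} -> rel T -> {set T} -> rel T -> Prop :=
| contracts_refl (A : {set T}) (E : rel T) : contracts A E A E
| contracts_step (A : {set T}) (E : rel T) (u v : T) (A' : {set T}) (E' : rel T) :
    u \in A -> v \in A -> u != v -> E u v ->
    contracts (contract_verts A v) (contract_adj A E u v) A' E' ->
    contracts A E A' E'.

Definition graph_iso (T H : finType) (A : {set T}) (E : rel T) (EH : rel H) : Prop :=
  exists f : T -> H,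
    [/\ {in A &, injective f}, (forall h : H, exists2 x, x \in A & f x = h)
      & {in A &, forall x y, E x y = EH (f x) (f y)}].

Definition has_contraction (T H : finType) (A : {set T}) (E : rel T) (EH : rel H) : Prop :=
  exists A' E', contracts A E A' E' /\ graph_iso A' E' EH.

Definition P5_adj : rel 'I_5 := fun i j => (i.+1 == j :> nat) || (j.+1 == i :> nat).

Definition two_colouring (m n : nat) (S : 'I_n -> {set 'I_m}) (Q1 Q2 : {set 'I_m}) : Prop :=
  [/\ Q1 :|: Q2 = setT, Q1 :&: Q2 = set0 &
      forall j : 'I_n, Q1 :&: S j != set0 /\ Q2 :&: S j != set0].

Definition has_two_colouring (m n : nat) (S : 'I_n -> {set 'I_m}) : Prop :=
  exists Q1 Q2, two_colouring S Q1 Q2.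

(* Q' = the vertices q^i_j, i.e. pairs (i,j) with q_i in S_j. *)
Definition Qp (m n : nat) (S : 'I_n -> {set 'I_m}) : finType :=
  {p : 'I_m * 'I_n | p.1 \in S p.2}.

(* Vertices: q_i | S_j | S'_j | q^i_j | specials (0 = q*, 1 = u1, 2 = u2, 3 = v, 4 = w) *)
Definition Vtx (m n : nat) (S : 'I_n -> {set 'I_m}) : finType :=
  (('I_m + 'I_n) + ('I_n + (Qp S + 'I_5)))%type.

Section G.
Variables (m n : nat) (S : 'I_n -> {set 'I_m}).

Definition vq (i : 'I_m) : Vtx S := inl (inl i).
Definition vS (j : 'I_n) : Vtx S := inl (inr j).
Definition vS' (j : 'I_n) : Vtx S := inr (inl j).
Definition vQ (p : Qp S) : Vtx S := inr (inr (inl p)).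
Definition vspec (k : 'I_5) : Vtx S := inr (inr (inr k)).

(* one orientation of each edge *)
Definition G_adj_dir (x y : Vtx S) : bool :=
  match x, y with
  | inr (inr (inl p)), inl (inl i) => i == (val p).1
  | inr (inr (inl p)), inl (inr j) => j == (val p).2
  | inl (inl i), inr (inl j) => i \in S j
  | inl (inr _), inr (inl _) => true
  | inr (inr (inr a)), inr (inr (inr b)) =>
      [|| (val a == 0) && (val b == 1), (val a == 0) && (val b == 2),
          (val a == 1) && (val b == 3) | (val a == 2) && (val b == 3)]
  | inr (inr (inr a)), inr (inr (inl _)) => val a == 0
  | inr (inr (inr a)), inl (inr _) => (val a == 1) || (val a == 2)
  | inr (inr (inr a)), inr (inl _) => val a == 4
  | _, _ => false
  end.

Definition G_adj : rel (Vtx S) := fun x y => G_adj_dir x y || G_adj_dir y x.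

End G.

Arguments G_adj {m n} S x y.
Arguments G_adj_dir {m n} S x y.

From mathcomp Require Import all_boot zify.
Set Implicit Arguments. Unset Strict Implicit. Unset Printing Implicit Defensive.

(* A sequence of contractions of a graph is recorded by a retraction phi onto
   the surviving vertices whose fibres (the bags) are connected, the
   contracted graph carrying the quotient adjacency; conversely such a
   retraction can be realised by contracting, inside each bag, edges from the
   representative. Contracting onto P_5 therefore amounts to a labelling of
   the vertices by 0..4 with connected levels that changes by at most one
   along every edge and takes the values 0 and 4.
   In G every pair of vertices is at distance at most 3, except {v, q_i},
   {v, w} and {w, q*}, so (up to the symmetry l |-> 4 - l) one of these pairs
   gets the labels 0 and 4. With q_i or q* at an end, u_1 and u_2 (resp. S'_1
   and S'_n) share a level in which one of them has no neighbour. With v at 0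
   and w at 4 the labelling is forced: u_1, u_2, q* get 1, the S_j get 2, the
   S'_j get 3 and every q_i gets 2 or 3; connectivity of level 3 makes each
   S_j meet the q_i at level 3, and connectivity of level 2 makes it meet
   those at level 2, a 2-colouring. Conversely a 2-colouring (Q_1, Q_2) yields
   the labelling v:0, {q*, u_1, u_2}:1, {S_j} + Q' + Q_2:2, {S'_j} + Q_1:3,
   w:4. *)

Section Contraction.
Variable T : finType.
Implicit Types (A C K R : {set T}) (E : rel T) (phi : T -> T).

Definition closed_in E K C := forall x y, x \in C -> y \in K -> E x y -> y \in C.

Definition connected_in E K :=
  forall C, C \subset K -> C != set0 -> closed_in E K C -> C = K.

Definition linked_in E K x y := forall C, closed_in E K C -> (x \in C) = (y \in C).

Lemma linked_in_trans E K y x z :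
  linked_in E K x y -> linked_in E K y z -> linked_in E K x z.
Proof. by move=> xy yz C clC; rewrite (xy C clC) (yz C clC). Qed.

Lemma linked_in_sym E K x y : linked_in E K x y -> linked_in E K y x.
Proof. by move=> xy C clC; rewrite (xy C clC). Qed.

Lemma linked_in_edge E K x y : symmetric E ->
  x \in K -> y \in K -> E x y -> linked_in E K x y.
Proof.
move=> sE xK yK Exy C clC; apply/idP/idP => [xC | yC]; first exact: clC xC yK Exy.
by apply: clC yC xK _; rewrite sE.
Qed.

Lemma connected_in_linked E K h :
  h \in K -> {in K, forall x, linked_in E K x h} -> connected_in E K.
Proof.
move=> hK linked C sCK /set0Pn [c cC] clC.
apply/eqP; rewrite eqEsubset sCK; apply/subsetP=> x xK.
by rewrite (linked x xK C clC) -(linked c (subsetP sCK c cC) C clC).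
Qed.

Lemma connected_in_closed E K C x y : connected_in E K -> closed_in E K C ->
  x \in C -> x \in K -> y \in K -> y \in C.
Proof.
move=> cK clC xC xK yK; have sCK : C :&: K \subset K by apply: subsetIr.
have CK0 : C :&: K != set0 by apply/set0Pn; exists x; rewrite inE xC.
have clCK : closed_in E K (C :&: K).
  by move=> a b /setIP [aC _] bK Eab; rewrite inE (clC a b aC bK Eab).
by move: yK; rewrite -(cK _ sCK CK0 clCK) => /setIP [].
Qed.

Lemma connected_in_neighbour E K x y : connected_in E K ->
  x \in K -> y \in K -> x != y -> exists2 z, z \in K & E x z.
Proof.
move=> cK xK yK xy; apply/exists_inP; apply: contraT; rewrite negb_exists_in.
move=> /forall_inP noE; have clx : closed_in E K [set x].
  by move=> a b; rewrite inE => /eqP -> bK Exb; move: (noE b bK); rewrite Exb.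
by have := connected_in_closed cK clx (set11 x) xK yK; rewrite inE eq_sym (negbTE xy).
Qed.

Lemma contract_adj_sym A E u v : symmetric E -> symmetric (contract_adj A E u v).
Proof.
move=> sE x y; rewrite /contract_adj (sE y x) (sE v x) (sE y v) [y == x]eq_sym.
by case: (x \in _); case: (y \in _); case: (x != y); case: (E x y);
   case: (x == u); case: (y == u); case: (E v y); case: (E x v).
Qed.

(* Contracting uv keeps u (see contract_adj), so this is the induced vertex map. *)
Definition merge (u v z : T) := if z == v then u else z.

Lemma merge_id u v z : z != v -> merge u v z = z.
Proof. by rewrite /merge => /negbTE ->. Qed.

Lemma merge_fibre phi u v z : phi v = phi u -> phi (merge u v z) = phi z.
Proof. by rewrite /merge; case: eqP => [->|]. Qed.

Lemma merge_in A u v z : u \in A -> u != v -> z \in A -> merge u v z \in A :\ v.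
Proof.
rewrite /merge => uA uv zA; case: eqP => [_|/eqP zv]; by rewrite !inE ?uv ?uA ?zv.
Qed.

Lemma contract_adj_merge A E u v a b :
  u \in A -> u != v -> a \in A -> b \in A -> E a b ->
  merge u v a != merge u v b -> contract_adj A E u v (merge u v a) (merge u v b).
Proof.
move=> uA uv aA bA Eab mab; rewrite /contract_adj !merge_in // mab /=.
move: mab Eab; rewrite /merge.
by case: (eqVneq a v) => [->|_]; case: (eqVneq b v) => [->|_];
  rewrite ?eqxx => // _ ->; rewrite ?orbT.
Qed.

Definition quotient_adj A E phi x y :=
  [exists a, exists b, [&& a \in A, b \in A, phi a == x, phi b == y & E a b]].

Lemma quotient_adjP A E phi x y :
  reflect (exists a, exists b, [/\ a \in A, b \in A, phi a = x, phi b = y & E a b])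
          (quotient_adj A E phi x y).
Proof.
apply: (iffP existsP) => [[a /existsP [b /and5P [? ? /eqP ? /eqP ? ?]]] | [a [b [? ? ? ? ?]]]].
  by exists a, b.
by exists a; apply/existsP; exists b; apply/and5P; split=> //; apply/eqP.
Qed.

Lemma quotient_adj_contract A E u v phi x y :
  u \in A -> v \in A -> u != v -> phi v = phi u -> x != y ->
  quotient_adj (A :\ v) (contract_adj A E u v) phi x y = quotient_adj A E phi x y.
Proof.
move=> uA vA uv pvu xy; apply/quotient_adjP/quotient_adjP => -[a [b [aA bA pa pb Eab]]].
- have sub_A z : z \in A :\ v -> z \in A by case/setD1P.
  case/and4P: Eab => _ _ _ /or3P [Eab | /andP [/eqP au Evb] | /andP [/eqP bu Eav]].
  + by exists a, b; split=> //; apply: sub_A.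
  + by exists v, b; split=> //; [apply: sub_A | rewrite pvu -au].
  + by exists a, v; split=> //; [apply: sub_A | rewrite pvu -bu].
- have mab : merge u v a != merge u v b.
    by apply: contra_neq xy; rewrite -pa -pb -(merge_fibre a pvu) => ->; rewrite merge_fibre.
  exists (merge u v a), (merge u v b); split; rewrite ?merge_in ?merge_fibre //.
  exact: contract_adj_merge.
Qed.

Lemma connected_in_contract A E u v phi s :
  u \in A -> v \in A -> u != v -> phi v = phi u ->
  connected_in E [set x in A | phi x == s] ->
  connected_in (contract_adj A E u v) [set x in A :\ v | phi x == s].
Proof.
move=> uA vA uv pvu cK C sCK' /set0Pn [c cC] clC.
have mK' z : z \in A -> phi z == s -> merge u v z \in [set x in A :\ v | phi x == s].
  by move=> zA pz; rewrite inE merge_in ?merge_fibre.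
have cK' : c \in A :\ v by have := subsetP sCK' c cC; rewrite inE => /andP [].
pose D := [set z in A | merge u v z \in C].
have sDK : D \subset [set x in A | phi x == s].
  apply/subsetP=> z; rewrite !inE => /andP [-> /(subsetP sCK')].
  by rewrite inE merge_fibre // => /andP [].
have D0 : D != set0.
  by apply/set0Pn; exists c; case/setD1P: cK' => cv cA; rewrite inE cA merge_id.
have clD : closed_in E [set x in A | phi x == s] D.
  move=> x y; rewrite !inE => /andP [xA xC] /andP [yA ys] Exy; rewrite yA /=.
  have [<- //|mxy] := eqVneq (merge u v x) (merge u v y).
  by apply: clC xC (mK' y yA ys) (contract_adj_merge uA uv xA yA Exy mxy).
have DK := cK D sDK D0 clD.
apply/eqP; rewrite eqEsubset sCK'; apply/subsetP=> z zK'.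
have /setD1P [zv zA] : z \in A :\ v by move: zK'; rewrite inE => /andP [].
have : z \in D by rewrite DK inE zA; move: zK'; rewrite inE => /andP [].
by rewrite inE merge_id // => /andP [].
Qed.

Lemma connected_in_uncontract A E u v phi s :
  symmetric E -> u \in A -> v \in A -> u != v -> E u v ->
  connected_in (contract_adj A E u v) [set x in A :\ v | phi x == s] ->
  connected_in E [set x in A | phi (merge u v x) == s].
Proof.
move=> sE uA vA uv Euv cK' C sCK C0 clC.
set K := [set x in A | _]; set K' := [set x in A :\ v | phi x == s].
have K'E z : (z \in K') = (z != v) && (z \in K).
  by rewrite !inE /merge; case: eqP => [->|_]; rewrite ?eqxx.
have vKE : (v \in K) = (u \in K) by rewrite !inE /merge eqxx (negbTE uv) vA uA.
have uCK : u \in C -> v \in K -> v \in C by move=> uC vK; apply: clC uC vK Euv.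
have vCu : v \in C -> u \in C.
  move=> vC; have uK : u \in K by rewrite -vKE (subsetP sCK).
  by apply: clC vC uK _; rewrite sE.
have sC'K' : C :\ v \subset K'.
  by apply/subsetP=> z /setD1P [zv zC]; rewrite K'E zv (subsetP sCK).
have C'0 : C :\ v != set0.
  case/set0Pn: C0 => c cC; apply/set0Pn.
  case: (eqVneq c v) => [cv|cv]; last by exists c; rewrite !inE cv.
  by exists u; rewrite !inE uv vCu -?cv.
have clC' : closed_in (contract_adj A E u v) K' (C :\ v).
  move=> x y /setD1P [xv xC]; rewrite K'E => /andP [yv yK]; rewrite !inE yv /=.
  have xK := subsetP sCK x xC.
  case/and4P=> _ _ _ /or3P [Exy | /andP [/eqP xu Evy] | /andP [/eqP yu Exv]].
  - exact: clC xC yK Exy.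
  - by rewrite xu -vKE in xK; apply: clC (uCK _ xK) yK Evy; rewrite -xu.
  - by rewrite yu; apply: vCu; apply: clC xC _ Exv; rewrite vKE -yu.
have C'K' := cK' _ sC'K' C'0 clC'.
apply/eqP; rewrite eqEsubset sCK; apply/subsetP=> z zK.
have zC z' : z' \in K' -> z' \in C.
  by move=> z'K'; have /setD1P [] : z' \in C :\ v by rewrite C'K'.
case: (eqVneq z v) => [zv|zv]; last by apply: zC; rewrite K'E zv.
by rewrite zv; apply: uCK; [apply: zC; rewrite K'E uv -vKE -zv | rewrite -zv].
Qed.

Lemma contract_adj_irr A E u v : irreflexive (contract_adj A E u v).
Proof. by move=> x; rewrite /contract_adj eqxx !andbF. Qed.

Lemma eq_in_quotient_adj A E phi psi x y :
  {in A, phi =1 psi} -> quotient_adj A E phi x y = quotient_adj A E psi x y.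
Proof.
move=> e; apply/quotient_adjP/quotient_adjP => -[a [b [aA bA <- <- Eab]]];
  by exists a, b; split; rewrite ?e.
Qed.

Definition connected_retraction E A R phi :=
  [/\ R \subset A, {in A, forall x, phi x \in R}, {in R, forall r, phi r = r}
    & {in R, forall r, connected_in E [set x in A | phi x == r]}].

Lemma contracts_connected_retraction A E A' E' :
  contracts A E A' E' -> symmetric E ->
  exists phi, connected_retraction E A A' phi /\
    {in A' &, forall x y, x != y -> E' x y = quotient_adj A E phi x y}.
Proof.
elim=> {A E A' E'} [A E | A E u v A' E' uA vA uv Euv _ IH] sE.
  exists id; split.
    split=> // r rA C sCr /set0Pn [c cC] _; apply/eqP; rewrite eqEsubset sCr /=.
    have /setIdP [_ /eqP cr] := subsetP sCr c cC.
    by apply/subsetP=> z /setIdP [_ /eqP ->]; rewrite -cr.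
  move=> x y xA yA _; apply/idP/quotient_adjP => [Exy | [a [b [_ _ <- <-]]]] //.
  by exists x, y.
rewrite /contract_verts in IH.
have [phi [[sA'A phiA' phi_id cphi] E'E]] := IH (contract_adj_sym A u v sE).
have mergeE z : z \in A :\ v -> merge u v z = z by case/setD1P => /merge_id.
exists (phi \o merge u v); split; first split.
- exact: subset_trans sA'A (subD1set A v).
- by move=> x xA; apply/phiA'/merge_in.
- by move=> r rA' /=; rewrite mergeE ?phi_id //; apply: (subsetP sA'A).
- by move=> r rA'; apply: connected_in_uncontract => //; apply: cphi.
have phi_merge : {in A :\ v, phi \o merge u v =1 phi} by move=> z /mergeE /= ->.
move=> x y xA' yA' xy; rewrite E'E // -(eq_in_quotient_adj _ _ _ phi_merge).
by rewrite quotient_adj_contract //= /merge eqxx (negbTE uv).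
Qed.

Lemma connected_retraction_edge E A R phi :
  irreflexive E -> connected_retraction E A R phi -> ~~ (A \subset R) ->
  exists r, exists2 v, r \in R /\ v \in A :\: R & phi v = r /\ E r v.
Proof.
move=> iE [sRA phiR phi_id cphi] /subsetPn [x xA xR].
have rR := phiR x xA; set r := phi x in rR.
have rx : r != x by apply: contraNneq xR => <-.
have [||z /setIdP [zA /eqP pz] Erz] := connected_in_neighbour (cphi r rR) _ _ rx.
- by rewrite inE phi_id ?eqxx ?(subsetP sRA).
- by rewrite inE xA eqxx.
exists r, z; split=> //; rewrite inE zA andbT.
by apply/negP=> zR; move: Erz; rewrite -pz phi_id ?iE.
Qed.

Lemma connected_retraction_contract E A R phi r v :
  connected_retraction E A R phi -> r \in R -> v \in A :\: R -> phi v = r ->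
  connected_retraction (contract_adj A E r v) (A :\ v) R phi.
Proof.
move=> [sRA phiR phi_id cphi] rR /setDP [vA vR] pv.
have rv : r != v by apply: contraNneq vR => <-.
split=> //.
- by apply/subsetP=> z zR; rewrite !inE (subsetP sRA) // andbT; apply: contraNneq vR => <-.
- by move=> x /setD1P [_ xA]; apply: phiR.
- move=> s sR; apply: connected_in_contract (subsetP sRA r rR) vA rv _ (cphi s sR).
  by rewrite pv phi_id.
Qed.

Lemma connected_retraction_contracts E A R phi :
  symmetric E -> irreflexive E -> connected_retraction E A R phi ->
  exists E', [/\ contracts A E R E', irreflexive E' &
    {in R &, forall x y, x != y -> E' x y = quotient_adj A E phi x y}].
Proof.
have [N] := ubnP #|A|; elim: N A E => // N IH A E /ltnSE szA sE iE cr.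
have [sRA _ phi_id _] := cr.
have [sAR | nAR] := boolP (A \subset R).
  have AR : A = R by apply/eqP; rewrite eqEsubset sAR sRA.
  exists E; split=> //; first by rewrite -AR; apply: contracts_refl.
  move=> x y xR yR _; apply/idP/quotient_adjP => [Exy | [a [b [aA bA <- <-]]]].
    by exists x, y; rewrite !phi_id // AR.
  by rewrite !phi_id // -AR.
have [r [v [rR vAR] [pv Erv]]] := connected_retraction_edge iE cr nAR.
have [vA vR] := setDP vAR.
have rv : r != v by apply: contraNneq vR => <-.
have szA' : #|A :\ v| < N by move: szA; rewrite (cardsD1 v A) vA.
have [E' [cE' iE' E'E]] := IH _ _ szA' (contract_adj_sym A r v sE)
  (contract_adj_irr A E r v) (connected_retraction_contract cr rR vAR pv).
exists E'; split=> //.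
  exact: contracts_step (subsetP sRA r rR) vA rv Erv cE'.
move=> x y xR yR xy; rewrite E'E //.
by rewrite (quotient_adj_contract _ (subsetP sRA r rR) vA rv) // pv phi_id.
Qed.

End Contraction.

Section PathLabelling.
Variables (T : finType) (E : rel T).
Hypothesis sE : symmetric E.

Definition P5_labelling (P : T -> nat) :=
  [/\ forall x y, E x y -> P x <= P y + 1, forall x, P x <= 4
    & forall k, k <= 4 -> connected_in E [set x | P x == k]].

Lemma P5_labelling_flip P : P5_labelling P -> P5_labelling (fun x => 4 - P x).
Proof.
move=> [lipP leP cP]; split=> [x y Exy | x | k k4].
- by have := lipP y x; rewrite sE => /(_ Exy); lia.
- exact: leq_subr.
- have -> : [set x | 4 - P x == k] = [set x | P x == 4 - k].
    by apply/setP=> x; rewrite !inE; have := leP x; lia.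
  by apply: cP; rewrite leq_subr.
Qed.

Lemma has_contraction_P5_labelling :
  has_contraction [set: T] E P5_adj ->
  exists P, [/\ P5_labelling P, exists x, P x = 0 & exists x, P x = 4].
Proof.
move=> [A' [E' [cE [f [f_inj f_onto f_adj]]]]].
have [phi [[_ phiA' phi_id cphi] E'E]] := contracts_connected_retraction cE sE.
have phiA x : phi x \in A' := phiA' x (in_setT x).
pose P x := nat_of_ord (f (phi x)).
have P_onto k : k < 5 -> exists2 r, r \in A' & P r = k.
  move=> k5; have [r rA' fr] := f_onto (Ordinal k5).
  by exists r; rewrite // /P phi_id // fr.
exists P; split; first split.
- move=> x y Exy; rewrite /P; have [-> | nxy] := eqVneq (phi x) (phi y); first lia.
  have : E' (phi x) (phi y) by rewrite E'E //; apply/quotient_adjP; exists x, y.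
  by rewrite f_adj // /P5_adj => /orP [] /eqP; lia.
- by move=> x; rewrite /P -ltnS.
- move=> k k4; have [r rA' Pr] := P_onto k k4.
  have -> : [set x | P x == k] = [set x in [set: T] | phi x == r].
    apply/setP=> x; rewrite !inE -Pr /P (phi_id _ rA').
    by apply/eqP/eqP => [/val_inj | ->]; first exact: f_inj.
  exact: cphi.
- by have [r _ Pr] := P_onto 0 isT; exists r.
- by have [r _ Pr] := P_onto 4 isT; exists r.
Qed.

Lemma P5_labelling_has_contraction P (rep : nat -> T) :
  irreflexive E -> P5_labelling P ->
  (forall k, k <= 4 -> P (rep k) = k) -> (forall k, k < 4 -> E (rep k) (rep k.+1)) ->
  has_contraction [set: T] E P5_adj.
Proof.
move=> iE [lipP leP cP] P_rep rep_adj.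
pose R := [set x | rep (P x) == x].
have rep_R x : rep (P x) \in R by rewrite inE P_rep.
have R_rep x : x \in R -> rep (P x) = x by rewrite inE => /eqP.
have P_inj : {in R &, injective P} by move=> x y /R_rep {2}<- /R_rep {2}<- ->.
have fibreE r : r \in R -> [set x in [set: T] | rep (P x) == r] = [set x | P x == P r].
  move=> rR; apply/setP=> x; rewrite !inE; apply/eqP/eqP => [<- | ->]; last exact: R_rep.
  by rewrite P_rep.
have cr : connected_retraction E [set: T] R (rep \o P).
  split=> [|x _ | r /R_rep // | r rR]; [exact: subsetT | exact: rep_R |].
  by rewrite /= fibreE //; apply: cP.
have [E' [cE iE' E'E]] := connected_retraction_contracts sE iE cr.
exists R, E'; split=> //; exists (fun x => inord (P x) : 'I_5); split.
- by move=> x y xR yR /(congr1 val) /=; rewrite !inordK ?ltnS // => /P_inj; apply.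
- move=> h; have h4 : h <= 4 by rewrite -ltnS.
  by exists (rep h); [rewrite inE P_rep | apply: val_inj; rewrite /= P_rep ?inordK].
move=> x y xR yR; rewrite /P5_adj /= !inordK ?ltnS //.
have [<- | xy] := eqVneq x y; first by rewrite iE' !eqn_leq !ltnn.
rewrite E'E //; apply/quotient_adjP/idP => [[a [b [_ _ /= pa pb Eab]]] | Pxy].
  have : P a != P b by apply: contra_neq xy => e; rewrite -pa -pb e.
  rewrite -pa -pb !P_rep //.
  by have := lipP a b Eab; have := lipP b a; rewrite sE => /(_ Eab); lia.
exists x, y; rewrite /= !R_rep //; split=> //.
rewrite -[x]R_rep // -[y]R_rep //.
have := leP x; have := leP y.
by case/orP: Pxy => /eqP <- *; [|rewrite sE]; apply: rep_adj; lia.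
Qed.

End PathLabelling.

Section HypergraphGraph.
Variables (m n : nat) (S : 'I_n -> {set 'I_m}).

Definition vqstar : Vtx S := vspec S (@Ordinal 5 0 isT).
Definition vu1 : Vtx S := vspec S (@Ordinal 5 1 isT).
Definition vu2 : Vtx S := vspec S (@Ordinal 5 2 isT).
Definition vv : Vtx S := vspec S (@Ordinal 5 3 isT).
Definition vw : Vtx S := vspec S (@Ordinal 5 4 isT).

Inductive vtx_spec : Vtx S -> Type :=
| VtxQ i : vtx_spec (vq S i)
| VtxS j : vtx_spec (vS S j)
| VtxS' j : vtx_spec (vS' S j)
| VtxQ' p : vtx_spec (vQ p)
| VtxQstar : vtx_spec vqstar
| VtxU1 : vtx_spec vu1
| VtxU2 : vtx_spec vu2
| VtxV : vtx_spec vv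
| VtxW : vtx_spec vw.

Lemma vtxP x : vtx_spec x.
Proof.
case: x => [[i | j] | [j | [p | [k k5]]]]; try by constructor.
by case: k k5 => [|[|[|[|[|k]]]]] // k5; rewrite (eq_irrelevance k5 isT); constructor.
Qed.

Lemma G_adj_sym : symmetric (G_adj S).
Proof. by move=> x y; rewrite /G_adj orbC. Qed.

Lemma G_adj_irr : irreflexive (G_adj S).
Proof. by move=> x; case: (vtxP x) => //= *; rewrite /G_adj /= ?orbF. Qed.

Lemma adj_qS' i j : i \in S j -> G_adj S (vq S i) (vS' S j).
Proof. by rewrite /G_adj /= => ->. Qed.
Lemma adj_SS' j k : G_adj S (vS S j) (vS' S k). Proof. by []. Qed.
Lemma adj_Q'q p : G_adj S (vQ p) (vq S (val p).1). Proof. by rewrite /G_adj /= eqxx. Qed.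
Lemma adj_Q'S p : G_adj S (vQ p) (vS S (val p).2). Proof. by rewrite /G_adj /= eqxx. Qed.
Lemma adj_Q'qstar p : G_adj S (vQ p) vqstar. Proof. by []. Qed.
Lemma adj_u1S j : G_adj S vu1 (vS S j). Proof. by []. Qed.
Lemma adj_u2S j : G_adj S vu2 (vS S j). Proof. by []. Qed.
Lemma adj_qstar_u1 : G_adj S vqstar vu1. Proof. by []. Qed.
Lemma adj_qstar_u2 : G_adj S vqstar vu2. Proof. by []. Qed.
Lemma adj_u1v : G_adj S vu1 vv. Proof. by []. Qed.
Lemma adj_u2v : G_adj S vu2 vv. Proof. by []. Qed.
Lemma adj_wS' j : G_adj S vw (vS' S j). Proof. by []. Qed.

Lemma vS_inj : injective (vS S). Proof. by move=> j k [->]. Qed.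
Lemma vS'_inj : injective (vS' S). Proof. by move=> j k [->]. Qed.

Lemma adj_S_cases j y : G_adj S (vS S j) y ->
  [\/ exists k, y = vS' S k, exists2 p : Qp S, (val p).2 = j & y = vQ p, y = vu1 | y = vu2].
Proof.
case: (vtxP y) => [i|k|k|p|||||]; rewrite /G_adj /= ?orbF // => adj.
- by constructor 1; exists k.
- by constructor 2; exists p => //; apply/eqP; rewrite eq_sym.
- by constructor 3.
- by constructor 4.
Qed.

Lemma adj_S'_cases j y : G_adj S (vS' S j) y ->
  [\/ exists2 i, i \in S j & y = vq S i, exists k, y = vS S k | y = vw].
Proof.
case: (vtxP y) => [i|k|k|p|||||]; rewrite /G_adj /= ?orbF // => adj.
- by constructor 1; exists i.
- by constructor 2; exists k.
- by constructor 3.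
Qed.

Lemma adj_Q'_cases p y : G_adj S (vQ p) y ->
  [\/ y = vq S (val p).1, y = vS S (val p).2 | y = vqstar].
Proof.
case: (vtxP y) => [i|k|k|p'|||||]; rewrite /G_adj /= ?orbF // => adj.
- by constructor 1; rewrite (eqP adj).
- by constructor 2; rewrite (eqP adj).
- by constructor 3.
Qed.

Lemma adj_u1_cases y : G_adj S vu1 y -> [\/ y = vqstar, y = vv | exists j, y = vS S j].
Proof.
case: (vtxP y) => [i|k|k|p|||||]; rewrite /G_adj /= ?orbF // => adj.
- by constructor 3; exists k.
- by constructor 1.
- by constructor 2.
Qed.

End HypergraphGraph.

Section FullLastEdge.
Variables (m n : nat) (S : 'I_n -> {set 'I_m}).
Hypothesis n2 : 1 < n.
Hypothesis Slast : forall j : 'I_n, val j = n.-1 -> S j = setT.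

Definition jfirst : 'I_n := Ordinal (ltnW n2).
Definition jlast : 'I_n := Ordinal (etrans (ltn_predL n) (ltnW n2)).

Lemma in_Slast i : i \in S jlast.
Proof. by rewrite Slast ?inE. Qed.

Definition qlast i : Qp S := exist _ (i, jlast) (in_Slast i).

Definition other j : 'I_n := if j == jlast then jfirst else jlast.

Lemma other_neq j : other j != j.
Proof.
rewrite /other; case: (eqVneq j jlast) => [-> | jl]; last by rewrite eq_sym.
by apply/eqP=> /(congr1 val) /=; case: n n2 => [|[|k]].
Qed.

Section ColouringToContraction.
Variables Q1 Q2 : {set 'I_m}.
Hypothesis col : two_colouring S Q1 Q2.

Definition colour_label (x : Vtx S) : nat :=
  match x with
  | inl (inl i) => if i \in Q1 then 3 else 2
  | inl (inr _) => 2
  | inr (inl _) => 3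
  | inr (inr (inl _)) => 2
  | inr (inr (inr k)) => nth 0 [:: 1; 1; 1; 0; 4] k
  end.

Lemma colour_in_Q1 j : exists2 i, i \in Q1 & i \in S j.
Proof. by case: col => _ _ /(_ j) [/set0Pn [i /setIP [? ?]] _]; exists i. Qed.

Lemma colour_notin_Q1 j : exists2 i, i \notin Q1 & i \in S j.
Proof.
case: col => _ Q12 /(_ j) [_ /set0Pn [i /setIP [iQ2 ?]]]; exists i => //.
by apply/negP=> iQ1; have := in_set0 i; rewrite -Q12 inE iQ1 iQ2.
Qed.

Lemma colour_label_le x : colour_label x <= 4.
Proof. by case: (vtxP x) => //= i; case: ifP. Qed.

Lemma colour_label_lip x y : G_adj S x y -> colour_label x <= colour_label y + 1.
Proof.
by case: (vtxP x) => [i|j|j|p|||||]; case: (vtxP y) => [i'|j'|j'|p'|||||] //=;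
  do ?case: ifP.
Qed.

Lemma colour_label_link k x y : G_adj S x y ->
  colour_label x = k -> colour_label y = k ->
  linked_in (G_adj S) [set z | colour_label z == k] x y.
Proof.
by move=> xy lx ly; apply: linked_in_edge xy; rewrite ?inE ?lx ?ly //; apply: G_adj_sym.
Qed.

Lemma colour_label_level2 : connected_in (G_adj S) [set x | colour_label x == 2].
Proof.
pose link := @colour_label_link 2.
have q_hub i : i \notin Q1 -> linked_in (G_adj S) [set x | colour_label x == 2]
                                          (vq S i) (vS S jlast).
  move=> iQ1; apply: (linked_in_trans _ (link _ _ (adj_Q'S (qlast i)) _ _)) => //.
  by apply/linked_in_sym/link; rewrite ?adj_Q'q //= (negbTE iQ1).
have S_hub j : linked_in (G_adj S) [set x | colour_label x == 2] (vS S j) (vS S jlast).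
  have [i iQ1 ij] := colour_notin_Q1 j; pose p : Qp S := exist _ (i, j) ij.
  apply: (linked_in_trans _ (q_hub i iQ1)).
  apply: (linked_in_trans (linked_in_sym (link _ _ (adj_Q'S p) _ _))) => //.
  by apply: link; rewrite ?adj_Q'q //= (negbTE iQ1).
apply: (connected_in_linked (h := vS S jlast)); first by rewrite inE.
move=> x; rewrite inE; case: (vtxP x) => //= [i | p _].
  by case: ifP => // /negbT iQ1 _; apply: q_hub.
exact: linked_in_trans (link _ _ (adj_Q'S p) _ _) (S_hub _).
Qed.

Lemma colour_label_level3 : connected_in (G_adj S) [set x | colour_label x == 3].
Proof.
pose link := @colour_label_link 3.
have q_hub i : i \in Q1 -> linked_in (G_adj S) [set x | colour_label x == 3]
                                       (vq S i) (vS' S jlast).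
  by move=> iQ1; apply: link; rewrite ?adj_qS' ?in_Slast //= iQ1.
apply: (connected_in_linked (h := vS' S jlast)); first by rewrite inE.
move=> x; rewrite inE; case: (vtxP x) => //= [i | j _].
  by case: ifP => // iQ1 _; apply: q_hub.
have [i iQ1 ij] := colour_in_Q1 j; apply: (linked_in_trans _ (q_hub i iQ1)).
by apply/linked_in_sym/link; rewrite ?adj_qS' //= iQ1.
Qed.

Lemma colour_label_labelling : P5_labelling (G_adj S) colour_label.
Proof.
split; [exact: colour_label_lip | exact: colour_label_le |].
case=> [|[|[|[|[|k]]]]] // _; try exact: colour_label_level2; try exact: colour_label_level3.
- apply: (connected_in_linked (h := vv S)); first by rewrite inE.
  by move=> x; rewrite inE; case: (vtxP x) => //= i; case: ifP.
- pose link := @colour_label_link 1.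
  apply: (connected_in_linked (h := vqstar S)); first by rewrite inE.
  move=> x; rewrite inE; case: (vtxP x) => //= [i||]; first by case: ifP.
  + by move=> _; apply/linked_in_sym/link; rewrite ?adj_qstar_u1.
  + by move=> _; apply/linked_in_sym/link; rewrite ?adj_qstar_u2.
- apply: (connected_in_linked (h := vw S)); first by rewrite inE.
  by move=> x; rewrite inE; case: (vtxP x) => //= i; case: ifP.
Qed.

Lemma two_colouring_has_contraction : has_contraction [set: Vtx S] (G_adj S) P5_adj.
Proof.
pose rep k := nth (vw S) [:: vv S; vu1 S; vS S jlast; vS' S jlast] k.
apply: (P5_labelling_has_contraction (@G_adj_sym _ _ S) (@G_adj_irr _ _ S)
  colour_label_labelling (rep := rep)); first by case=> [|[|[|[|[|k]]]]].
by case=> [|[|[|[|k]]]].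
Qed.

End ColouringToContraction.

Section ContractionToColouring.
Variable P : Vtx S -> nat.
Hypothesis lab : P5_labelling (G_adj S) P.

Lemma label_adj x y : G_adj S x y -> P x <= P y + 1 /\ P y <= P x + 1.
Proof. by case: lab => lip _ _ xy; rewrite !lip // G_adj_sym. Qed.

Lemma label_level_neighbour x y :
  P x = P y -> x != y -> exists2 z, G_adj S x z & P z = P x.
Proof.
case: lab => _ le4 cP Pxy xy.
have [||z /[!inE] /eqP Pz xz] := connected_in_neighbour (cP _ (le4 x)) _ _ xy.
- by rewrite inE.
- by rewrite inE Pxy.
by exists z.
Qed.

Ltac edge e := let l := fresh "l" in let r := fresh "r" in
  have [l r] := label_adj e; rewrite /= in l r.

Lemma label_v0_q4 i : P (vv S) = 0 -> P (vq S i) = 4 -> False.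
Proof.
move=> Pv Pq; edge (adj_qS' (in_Slast i)); edge (adj_Q'q (qlast i)).
edge (adj_Q'qstar (qlast i)).
edge (adj_qstar_u1 S); edge (adj_qstar_u2 S); edge (adj_u1v S); edge (adj_u2v S).
have [|//|z /adj_u1_cases [->|->|[j ->]]] := @label_level_neighbour (vu1 S) (vu2 S); try lia.
by edge (adj_SS' S j jlast); lia.
Qed.

Lemma label_qstar0_w4 : P (vqstar S) = 0 -> P (vw S) = 4 -> False.
Proof.
move=> Pq Pw; edge (adj_qstar_u1 S); edge (adj_u1S S jlast).
have PS' k : P (vS' S k) = 3 by edge (adj_wS' S k); edge (adj_SS' S jlast k); lia.
have [|/=|z /adj_S'_cases [[i _ ->]|[k ->]|->]] :=
  @label_level_neighbour (vS' S (other jlast)) (vS' S jlast); rewrite ?PS' ?Pw //.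
- by rewrite (inj_eq (@vS'_inj _ _ S)) other_neq.
- by edge (adj_Q'q (qlast i)); edge (adj_Q'qstar (qlast i)); lia.
- by edge (adj_u1S S k); lia.
Qed.

(* Edges joining x to the core {v, u_1, u_2, q*, S_n, S'_n, w}; together with
   the core edges they realise every distance at most 3 in G. *)
Ltac hub_edges x := match x with
  | vq _ ?i => edge (adj_qS' (in_Slast i)); edge (adj_Q'q (qlast i)); edge (adj_Q'qstar (qlast i))
  | vS _ ?k => edge (adj_SS' S k jlast); edge (adj_u1S S k); edge (adj_u2S S k)
  | vS' _ ?k => edge (adj_SS' S jlast k); edge (adj_wS' S k)
  | vQ ?p => edge (adj_Q'qstar p); edge (adj_Q'S p); edge (adj_Q'q p);
             edge (adj_SS' S (val p).2 jlast); edge (adj_u1S S (val p).2)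
  | _ => idtac
  end.

Lemma label_extremes x y : P x = 0 -> P y = 4 ->
  [\/ x = vv S /\ (y = vw S \/ exists i, y = vq S i),
      y = vv S /\ (x = vw S \/ exists i, x = vq S i),
      x = vqstar S /\ y = vw S
    | x = vw S /\ y = vqstar S].
Proof.
edge (adj_SS' S jlast jlast); edge (adj_u1S S jlast); edge (adj_u2S S jlast).
edge (adj_qstar_u1 S); edge (adj_qstar_u2 S); edge (adj_u1v S); edge (adj_u2v S).
edge (adj_wS' S jlast).
case: (vtxP x) => [i|k|k|p|||||] Px; case: (vtxP y) => [i'|k'|k'|p'|||||] Py;
  match goal with _ : P ?a = 0, _ : P ?b = 4 |- _ => hub_edges a; hub_edges b end;
  try match goal with
    | _ : P (vS' _ ?k) = _, _ : P (vQ ?p) = _ |- _ => edge (adj_SS' S (val p).2 k)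
  end;
  try lia.
all: first [ by constructor 1; split; eauto | by constructor 2; split; eauto
           | by constructor 3 | by constructor 4 ].
Qed.

Section EndsVW.
Hypotheses (Pv : P (vv S) = 0) (Pw : P (vw S) = 4).

Lemma label_S j : P (vS S j) = 2.
Proof.
by edge (adj_u1S S j); edge (adj_u1v S); edge (adj_SS' S j jlast); edge (adj_wS' S jlast); lia.
Qed.

Lemma label_S' k : P (vS' S k) = 3.
Proof. by edge (adj_wS' S k); edge (adj_SS' S jlast k); have := label_S jlast; lia. Qed.

Lemma label_u1 : P (vu1 S) = 1.
Proof. by edge (adj_u1v S); edge (adj_u1S S jlast); have := label_S jlast; lia. Qed.

Lemma label_u2 : P (vu2 S) = 1.
Proof. by edge (adj_u2v S); edge (adj_u2S S jlast); have := label_S jlast; lia. Qed.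

Lemma label_qstar : P (vqstar S) = 1.
Proof.
have [|//|z /adj_u1_cases [->|->|[j ->]]] := @label_level_neighbour (vu1 S) (vu2 S).
all: by rewrite ?label_u1 ?label_u2 ?label_S ?Pv.
Qed.

Lemma label_q i : P (vq S i) = 2 \/ P (vq S i) = 3.
Proof.
edge (adj_qS' (in_Slast i)); edge (adj_Q'q (qlast i)); edge (adj_Q'qstar (qlast i)).
by have := label_S' jlast; have := label_qstar; lia.
Qed.

Definition label_colour_class := [set i | P (vq S i) == 3].

Lemma label_colour_class_meets j : label_colour_class :&: S j != set0.
Proof.
have [|/=|z /adj_S'_cases [[i ij ->]|[k ->]|->]] :=
  @label_level_neighbour (vS' S j) (vS' S (other j)); rewrite ?label_S' ?label_S ?Pw //.
- by rewrite (inj_eq (@vS'_inj _ _ S)) eq_sym other_neq.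
- by move=> Pi; apply/set0Pn; exists i; rewrite !inE Pi eqxx ij.
Qed.

Lemma label_colour_class_compl_meets j : ~: label_colour_class :&: S j != set0.
Proof.
apply/negP=> /eqP noQ2; have [_ _ cP] := lab.
have Pq3 i : i \in S j -> P (vq S i) = 3.
  move=> ij; case: (label_q i) => // Pi.
  by have := in_set0 i; rewrite -noQ2 !inE Pi ij.
(* S_j and its q^i_j: within level 2 they can only be left through some q_i
   with i in S_j, and those are all at level 3. *)
pose C := [set x | (x == vS S j) || [exists p : Qp S, (x == vQ p) && ((val p).2 == j)]].
have clC : closed_in (G_adj S) [set x | P x == 2] C.
  move=> x y; rewrite !inE => /orP [/eqP -> | /existsP [p /andP [/eqP -> /eqP pj]]] /eqP Py.
  - case/adj_S_cases => [[k Ey] | [p pj Ey] | Ey | Ey]; move: Py;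
      rewrite Ey ?label_S' ?label_u1 ?label_u2 //.
    by move=> _; apply/orP; right; apply/existsP; exists p; rewrite pj !eqxx.
  - case/adj_Q'_cases => Ey; move: Py; rewrite Ey ?label_qstar ?pj ?eqxx //.
    by rewrite Pq3 // -pj (valP p).
have := connected_in_closed (x := vS S j) (y := vS S (other j)) (cP 2 isT) clC.
rewrite !inE !label_S !eqxx (inj_eq (@vS_inj _ _ S)) (negbTE (other_neq j)) /=.
by move=> /(_ isT isT isT) /existsP [p].
Qed.

Lemma label_two_colouring : has_two_colouring S.
Proof.
exists label_colour_class, (~: label_colour_class); split; [exact: setUCr | exact: setICr |].
by move=> j; rewrite label_colour_class_meets label_colour_class_compl_meets.
Qed.

End EndsVW.

End ContractionToColouring.

Lemma has_contraction_two_colouring :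
  has_contraction [set: Vtx S] (G_adj S) P5_adj -> has_two_colouring S.
Proof.
case/(has_contraction_P5_labelling (@G_adj_sym _ _ S)) => P [lab [x Px] [y Py]].
have flip := P5_labelling_flip (@G_adj_sym _ _ S) lab.
have flip04 z : P z = 0 -> 4 - P z = 4 by move=> ->.
have flip40 z : P z = 4 -> 4 - P z = 0 by move=> ->.
case: (label_extremes lab Px Py) => [[ex [ey | [i ey]]] | [ey [ex | [i ex]]] | [ex ey] | [ex ey]];
  subst x y.
- exact: label_two_colouring lab Px Py.
- by case: (label_v0_q4 lab Px Py).
- exact: label_two_colouring flip (flip40 _ Py) (flip04 _ Px).
- by case: (label_v0_q4 flip (flip40 _ Py) (flip04 _ Px)).
- by case: (label_qstar0_w4 lab Px Py).
- by case: (label_qstar0_w4 flip (flip40 _ Py) (flip04 _ Px)).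
Qed.

End FullLastEdge.

Theorem lemma3 (m n : nat) (S : 'I_n -> {set 'I_m}) :
  2 <= n ->
  (forall j : 'I_n, S j != set0) ->
  (forall j : 'I_n, val j = n.-1 -> S j = setT) ->
  has_two_colouring S <-> has_contraction [set: Vtx S] (G_adj S) P5_adj.
Proof.
move=> n2 _ Slast; split; last exact: has_contraction_two_colouring.
by case=> Q1 [Q2 col]; apply: two_colouring_has_contraction col.
Qed.
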